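(* For every $k\ge0$ there are constants $c,c'>0$ such that the following holds. For every $n\ge2k$ and every weighted $k$-uniform hypergraph $w$ on $[n]$, $$cn^{-k}\|w\|_1 \le \sum_{i=0}^k W_i\le c'n^{-k}\|w\|_1,$$ where $(W_0,\ldots,W_k)$ is the $W$-vector of $w$.
   Context: $[n]=\{1,\dots,n\}$; $V^{(k)}$ is the family of $k$-subsets of $V$; a weighted $k$-uniform hypergraph on $V$ is a function $w:V^{(k)}\to\mathbb{R}$; $w(S)=\sum_{e\in S^{(k)}}w(e)$; $\|w\|_1=\sum_e|w(e)|$. $W$-vector (defined recursively on $k$): for $w$ on an $n$-set $V$, $W_0=|w(V)|/\binom nk$ (for $k=0$, $w$ is a single real number and $W_0=|w|$). For $k\ge1$ and distinct $x,y\in V$, $w^{xy}:(V\setminus\{x,y\})^{(k-1)}\to\mathbb{R}$ is $w^{xy}(e)=w(e\cup\{x\})-w(e\cup\{y\})$; with $(W^{xy}_0,\ldots,W^{xy}_{k-1})$ its $W$-vector, $W_i=\frac{1}{n(n-1)}\sum_{(x,y):\,x\ne y}W^{xy}_{i-1}$ for $1\le i\le k$ (average over ordered pairs of distinct vertices). *)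

From mathcomp Require Import all_boot all_order all_algebra.
Set Implicit Arguments. Unset Strict Implicit. Unset Printing Implicit Defensive.
Import Order.TTheory GRing.Theory Num.Theory.
Local Open Scope ring_scope.

(* A weighted k-uniform hypergraph on a vertex set V : {set T} is represented
   by a function w : {set T} -> R; only its values on the k-subsets of V are
   ever used. *)

Definition wsum (R : numDomainType) (T : finType) (k : nat)
  (w : {set T} -> R) (S : {set T}) : R :=
  \sum_(e : {set T} | (e \subset S) && (#|e| == k)) w e.

Definition wnorm1 (R : numDomainType) (T : finType) (k : nat)
  (w : {set T} -> R) (V : {set T}) : R :=
  \sum_(e : {set T} | (e \subset V) && (#|e| == k)) `|w e|.

Definition wxy (R : numDomainType) (T : finType) (w : {set T} -> R) (x y : T)
  : {set T} -> R := fun e => w (x |: e) - w (y |: e).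

(* Wvec k V w i = W_i of the k-uniform weighted hypergraph w on V
   (meaningful for i <= k; equal to 0 for i > k). *)
Fixpoint Wvec (R : numFieldType) (T : finType) (k : nat)
  (V : {set T}) (w : {set T} -> R) (i : nat) {struct k} : R :=
  match i with
  | 0%N => `|wsum k w V| / ('C(#|V|, k))%:R
  | i'.+1 =>
      match k with
      | 0%N => 0
      | k'.+1 =>
          ((#|V| * (#|V|).-1)%:R)^-1 *
          \sum_(x in V) \sum_(y in V | y != x)
              Wvec k' (V :\ x :\ y) (wxy w x y) i'
      end
  end.

From mathcomp Require Import all_boot all_order all_algebra.
From mathcomp Require Import zify ring.
Import Order.TTheory GRing.Theory Num.Theory.
Local Open Scope ring_scope.

(* Both bounds go by induction on k through the links [wlink w x], the
   (k-1)-graphs e |-> w (x |: e) on V :\ x, using that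
   w^{xy}(e) = wlink w x e - wlink w y e.  For the upper bound, W_0 is at most
   ||w|| / C(n, k) and ||w^{xy}|| is at most the sum of the norms of the links
   at x and y, which add up to k ||w||.  For the lower bound, applying the L1
   Poincare inequality of the complete graph to x |-> w-sum of the link at x,
   inside an induction over links, gives
     (n + 1) ||w|| <= 2^k ((n + 1) |w(V)| + sum_{x <> y} ||w^{xy}||),
   and the induction hypothesis bounds each ||w^{xy}|| by the W-vector of
   w^{xy}. *)

Lemma ffact_le_expn n k : (n ^_ k <= n ^ k)%N.
Proof.
elim: k => [|k IH]; first by rewrite ffactn0.
by rewrite ffactnSr expnSr leq_mul // leq_subr.
Qed.

Lemma bin_le_expn n k : ('C(n, k) <= n ^ k)%N.
Proof.
apply: leq_trans (ffact_le_expn n k); rewrite -bin_ffact leq_pmulr //.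
exact: fact_gt0.
Qed.

Lemma expn_le_ffact n k : (2 * k <= n)%N -> (n ^ k <= 2 ^ k * n ^_ k)%N.
Proof.
elim: k => [|k IH] hk; first by rewrite ffactn0.
have /IH IHk : (2 * k <= n)%N by lia.
rewrite ffactnSr expnSr expnS.
apply: leq_trans (leq_mul IHk (_ : n <= 2 * (n - k))%N) _; first lia.
by rewrite mulnCA !mulnA.
Qed.

Lemma expn_le_bin n k : (2 * k <= n)%N -> (n ^ k <= 2 ^ k * k`! * 'C(n, k))%N.
Proof. by move=> hk; rewrite -mulnA [(k`! * _)%N]mulnC bin_ffact expn_le_ffact. Qed.

Lemma expnS_le_pred_pred n m :
  (2 * m.+1 <= n)%N -> (n ^ m.+1 <= 2 ^ m.+1 * (n.-1 * n.-2 ^ m))%N.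
Proof.
move=> hn; rewrite expnS [(2 ^ _)%N]expnS mulnCA -mulnA mulnCA mulnA -expnMn.
apply: leq_mul; first lia.
by case: m hn => // m hn; rewrite leq_exp2r //; lia.
Qed.

Fixpoint Wupper_const (R : realFieldType) (k : nat) : R :=
  if k is m.+1 then 2 ^+ m.+1 * ((m.+1)`!%:R + (m.+1).*2%:R * Wupper_const R m)
  else 1.

Lemma Wupper_const_gt0 (R : realFieldType) k : 0 < Wupper_const R k.
Proof.
elim: k => [|m IH] //=.
by rewrite mulr_gt0 ?exprn_gt0 // ltr_wpDr ?mulr_ge0 ?ltW // ltr0n fact_gt0.
Qed.

Section Hypergraph.

Variables (R : realFieldType) (T : finType).
Implicit Types (V U : {set T}) (w : {set T} -> R).

Definition wlink w (x : T) : {set T} -> R := fun e => w (x |: e).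

Definition pair_variation k V w : R :=
  if k is j.+1 then
    \sum_(x in V) \sum_(y in V | y != x) wnorm1 j (wxy w x y) (V :\ x :\ y)
  else 0.

Definition Wtotal k V w : R := \sum_(0 <= i < k.+1) Wvec k V w i.

Lemma ler_sum_subpred (I : finType) (P Q : pred I) (F : I -> R) :
  (forall i, P i -> Q i) -> (forall i, Q i -> 0 <= F i) ->
  \sum_(i | P i) F i <= \sum_(i | Q i) F i.
Proof.
move=> PQ F_ge0; rewrite [X in _ <= X](bigID P) /=.
rewrite (eq_bigl P) => [|i]; last by apply/andP/idP => [[]//|Pi]; split=> //; exact: PQ.
by rewrite lerDl sumr_ge0 // => i /andP[/F_ge0].
Qed.

Lemma setD1C V x y : V :\ x :\ y = V :\ y :\ x.
Proof. by apply/setP => z; rewrite !inE andbCA. Qed.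

Lemma cardsD1D1 V x y : x \in V -> y \in V -> y != x ->
  #|V| = (#|V :\ x :\ y|).+2.
Proof.
by move=> xV yV yx; rewrite (cardsD1 x V) xV (cardsD1 y (V :\ x)) !inE yx yV.
Qed.

Lemma sum_subsets0 V (F : {set T} -> R) :
  \sum_(e : {set T} | (e \subset V) && (#|e| == 0%N)) F e = F set0.
Proof.
rewrite (eq_bigl (fun e => e == set0)) ?big_pred1_eq // => e.
by rewrite cards_eq0; case: (e =P set0) => [->|_]; rewrite ?sub0set ?andbF.
Qed.

Lemma sum_subsets_mem V (x : T) (j : nat) (F : {set T} -> R) : x \in V ->
  \sum_(f : {set T} | ((f \subset V) && (#|f| == j)) && (x \in f)) F f =
  \sum_(e : {set T} | (e \subset V :\ x) && (#|e|.+1 == j)) F (x |: e).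
Proof.
move=> xV.
rewrite (reindex_onto (fun e => x |: e) (fun f => f :\ x)) /=; last first.
  by move=> f /andP[_ xf]; rewrite setD1K.
apply: eq_bigl => e.
rewrite setU11 andbT subsetD1 cardsU1 subUset sub1set xV /=.
case xe: (x \in e) => /=; last by rewrite setU1K ?(negbT xe) // eqxx !andbT add1n.
rewrite andbF; case: ((x |: e) :\ x =P e) => He; rewrite ?andbF //.
by have := setD11 x (x |: e); rewrite He xe.
Qed.

(* Double counting of the pairs (x, f) with x \in f. *)
Lemma sum_subsetsS V (j : nat) (F : {set T} -> R) :
  (\sum_(f : {set T} | (f \subset V) && (#|f| == j.+1)) F f) *+ j.+1 =
  \sum_(x in V) \sum_(e : {set T} | (e \subset V :\ x) && (#|e| == j)) F (x |: e).
Proof.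
rewrite -sumrMnl.
transitivity (\sum_(f : {set T} | (f \subset V) && (#|f| == j.+1)) \sum_(x in f) F f).
  by apply: eq_bigr => f /andP[_ /eqP cf]; rewrite sumr_const cf.
rewrite (exchange_big_dep (mem V)) /=; last by move=> f y /andP[/subsetP fV _]; exact: fV.
by apply: eq_bigr => x xV; exact: sum_subsets_mem.
Qed.

Lemma wnorm1_link j V w :
  wnorm1 j.+1 w V *+ j.+1 = \sum_(x in V) wnorm1 j (wlink w x) (V :\ x).
Proof. exact: sum_subsetsS. Qed.

Lemma wsum_link j V w :
  wsum j.+1 w V *+ j.+1 = \sum_(x in V) wsum j (wlink w x) (V :\ x).
Proof. exact: sum_subsetsS. Qed.

Lemma wnorm1_ge0 k V w : 0 <= wnorm1 k w V.
Proof. exact: sumr_ge0. Qed.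

Lemma wnorm1_wxy k U w x y :
  wnorm1 k (wxy w x y) U <= wnorm1 k (wlink w x) U + wnorm1 k (wlink w y) U.
Proof. by rewrite /wnorm1 -big_split /=; apply: ler_sum => e _; exact: ler_normB. Qed.

Lemma wnorm1_subset k U V w : U \subset V -> wnorm1 k w U <= wnorm1 k w V.
Proof.
move=> sUV; apply: ler_sum_subpred => [e /andP[eU ->]|//].
by rewrite (subset_trans eU sUV).
Qed.

Lemma wsum_link_split m V w (x y : T) : y \in V :\ x ->
  wsum m (wlink w x) (V :\ x) =
  wsum m (wlink w x) (V :\ x :\ y) +
  \sum_(e : {set T} | (e \subset V :\ x :\ y) && (#|e|.+1 == m)) w (x |: (y |: e)).
Proof.
move=> yV; rewrite /wsum (bigID (fun e : {set T} => y \in e)) /= addrC; congr (_ + _).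
  by apply: eq_bigl => e; rewrite [e \subset V :\ x :\ y]subsetD1 andbAC.
exact: (sum_subsets_mem (V :\ x) y m (wlink w x) yV).
Qed.

Lemma wsum_linkB m V w (x y : T) : x \in V -> y \in V -> y != x ->
  wsum m (wlink w x) (V :\ x) - wsum m (wlink w y) (V :\ y) =
  wsum m (wxy w x y) (V :\ x :\ y).
Proof.
move=> xV yV yx.
rewrite (wsum_link_split m V w x y); last by rewrite !inE yx.
rewrite (wsum_link_split m V w y x); last by rewrite !inE eq_sym yx.
rewrite [V :\ y :\ x]setD1C.
under [X in _ - (_ + X)]eq_bigr do rewrite setUCA.
by rewrite opprD addrACA subrr addr0 /wsum -sumrB.
Qed.


Lemma sum_triples (G : T -> T -> T -> R) V :
  \sum_(x in V) \sum_(y in V :\ x) \sum_(z in V :\ x | z != y) G x y z =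
  \sum_(y in V) \sum_(z in V | z != y) \sum_(x in V :\ y :\ z) G x y z.
Proof.
rewrite (exchange_big_dep (mem V)) /=; last by move=> x y _; rewrite !inE => /andP[].
apply: eq_bigr => y yV.
rewrite (exchange_big_dep (fun z => (z \in V) && (z != y))) /=; last first.
  by move=> x z _; rewrite !inE => /andP[/andP[_ ->] ->].
apply: eq_bigr => z /andP[zV zy]; apply: eq_bigl => x.
rewrite !inE yV zV zy /= !andbT (eq_sym y) (eq_sym z).
by case: (x \in V); case: (x != y); case: (x != z).
Qed.

Lemma pair_variation_link m V w :
  \sum_(x in V) pair_variation m (V :\ x) (wlink w x) = pair_variation m.+1 V w *+ m.
Proof.
case: m => [|m]; first by rewrite big1.
rewrite /= (sum_triples (fun x y z => wnorm1 m (wxy (wlink w x) y z) (V :\ x :\ y :\ z))).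
rewrite -sumrMnl; apply: eq_bigr => y yV.
rewrite -sumrMnl; apply: eq_bigr => z _.
rewrite wnorm1_link; apply: eq_bigr => x _.
have -> : V :\ x :\ y :\ z = V :\ y :\ z :\ x by rewrite [V :\ x :\ y]setD1C setD1C.
by apply: eq_bigr => e _; rewrite /wxy /wlink !(setUCA [set x]).
Qed.

Lemma poincare_complete_graph V (d : T -> R) :
  #|V|%:R * \sum_(x in V) `|d x| <=
  #|V|%:R * `|\sum_(x in V) d x| + \sum_(x in V) \sum_(y in V | y != x) `|d x - d y|.
Proof.
have norm_d_le x : x \in V -> #|V|%:R * `|d x| <=
   `|\sum_(x in V) d x| + \sum_(y in V | y != x) `|d x - d y|.
  move=> xV.
  have -> : #|V|%:R * `|d x| = `|\sum_(y in V) d y + \sum_(y in V) (d x - d y)|.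
    by rewrite sumrB sumr_const addrC subrK -normr_nat -normrM mulr_natl.
  apply: le_trans (ler_normD _ _) _.
  rewrite lerD2l (bigD1 x) //= subrr add0r; exact: ler_norm_sum.
rewrite mulr_sumr; apply: le_trans (ler_sum _ norm_d_le) _.
by rewrite big_split /= sumr_const mulr_natl.
Qed.

(* The factor 2 per level is n + 1 <= 2 n, relating the bound on V :\ x to V. *)
Lemma poincare k V w :
  (#|V|.+1)%:R * wnorm1 k w V <=
  2 ^+ k * ((#|V|.+1)%:R * `|wsum k w V| + pair_variation k V w).
Proof.
elim: k V w => [|m IH] V w.
  by rewrite /wnorm1 /wsum !sum_subsets0 expr0 mul1r addr0.
set n := #|V|.
pose d x := wsum m (wlink w x) (V :\ x).
have link_bound x : x \in V -> (n.+1)%:R * wnorm1 m (wlink w x) (V :\ x) <=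
    2 ^+ m.+1 * (n%:R * `|d x| + pair_variation m (V :\ x) (wlink w x)).
  move=> xV; have n_eq : n = (#|V :\ x|).+1 by rewrite /n (cardsD1 x V) xV.
  have := IH (V :\ x) (wlink w x); rewrite -n_eq => IHx.
  apply: le_trans (_ : 2 * (n%:R * wnorm1 m (wlink w x) (V :\ x)) <= _).
    by rewrite mulrA ler_wpM2r ?wnorm1_ge0 // -natrM ler_nat; lia.
  by rewrite exprS -mulrA ler_wpM2l.
have var_d : \sum_(x in V) \sum_(y in V | y != x) `|d x - d y| <= pair_variation m.+1 V w.
  apply: ler_sum => x xV; apply: ler_sum => y /andP[yV yx].
  by rewrite /d wsum_linkB //; exact: ler_norm_sum.
rewrite -(ler_pMn2r (ltn0Sn m)) -mulrnAr wnorm1_link mulr_sumr.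
apply: le_trans (ler_sum _ link_bound) _.
rewrite -mulr_sumr big_split /= -mulr_sumr pair_variation_link -mulrnAr.
rewrite ler_wpM2l ?exprn_ge0 //.
have spread := le_trans (poincare_complete_graph V d) (lerD (lexx _) var_d).
apply: le_trans (lerD spread (lexx _)) _.
rewrite -[X in X <= _]addrA -mulrS mulrnDl lerD2r /d -wsum_link normrMn -mulrnAr.
by rewrite ler_wpM2r ?mulrn_wge0 // ler_nat /n.
Qed.

Lemma Wvec_ge0 k V w i : 0 <= Wvec k V w i.
Proof.
elim: k V w i => [|k IH] V w [|i] /=; rewrite ?divr_ge0 //.
by rewrite mulr_ge0 ?invr_ge0 // sumr_ge0 // => x _; rewrite sumr_ge0.
Qed.

Lemma Wtotal_ge0 k V w : 0 <= Wtotal k V w.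
Proof. by apply: sumr_ge0 => i _; exact: Wvec_ge0. Qed.

Lemma WtotalS m V w :
  Wtotal m.+1 V w = Wvec m.+1 V w 0 + ((#|V| * (#|V|).-1)%N%:R)^-1 *
    \sum_(x in V) \sum_(y in V | y != x) Wtotal m (V :\ x :\ y) (wxy w x y).
Proof.
rewrite /Wtotal big_nat_recl //=; congr (_ + _).
rewrite -mulr_sumr; congr (_ * _).
by rewrite exchange_big /=; apply: eq_bigr => x _; rewrite exchange_big.
Qed.

Lemma Wvec0E k V w : Wvec k V w 0 = `|wsum k w V| / ('C(#|V|, k))%:R.
Proof. by case: k. Qed.

Lemma normr_wsum_le_Wvec0 k V w : (k <= #|V|)%N ->
  `|wsum k w V| <= #|V|%:R ^+ k * Wvec k V w 0.
Proof.
move=> kV; rewrite Wvec0E mulrA ler_pdivlMr ?ltr0n ?bin_gt0 //.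
by rewrite mulrC ler_wpM2r // -natrX ler_nat bin_le_expn.
Qed.

Lemma Wvec0_le_wnorm1 k V w : (2 * k <= #|V|)%N ->
  #|V|%:R ^+ k * Wvec k V w 0 <= (2 ^ k * k`!)%:R * wnorm1 k w V.
Proof.
move=> kV; rewrite Wvec0E mulrA ler_pdivrMr ?ltr0n ?bin_gt0; last lia.
rewrite mulrAC ler_pM ?exprn_ge0 ?ler_norm_sum // -natrX -natrM ler_nat.
exact: expn_le_bin.
Qed.

Lemma sum_pairsD V (a : T -> R) :
  \sum_(x in V) \sum_(y in V) (a x + a y) = (\sum_(x in V) a x) *+ (2 * #|V|).
Proof.
under eq_bigr do rewrite big_split /= sumr_const.
by rewrite big_split /= sumr_const sumrMnl -mulrnDr addnn -mul2n.
Qed.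

Lemma Wtotal_upper k V w : (2 * k <= #|V|)%N ->
  #|V|%:R ^+ k * Wtotal k V w <= Wupper_const R k * wnorm1 k w V.
Proof.
elim: k V w => [|m IH] V w hV.
  by rewrite /Wtotal big_nat1 /= bin0 !expr0 divr1 !mul1r /wnorm1 /wsum !sum_subsets0.
set n := #|V|; set C := Wupper_const R m.
have C_ge0 : 0 <= C := ltW (Wupper_const_gt0 R m).
rewrite WtotalS; set P := \sum_(x in V) _.
pose a x := wnorm1 m (wlink w x) (V :\ x).
have pair_bound : (n.-2)%:R ^+ m * P <= n%:R * ((m.+1).*2%:R * C * wnorm1 m.+1 w V).
  apply: le_trans (_ : _ <= \sum_(x in V) \sum_(y in V) C * (a x + a y)) _.
    rewrite mulr_sumr; apply: ler_sum => x xV; rewrite mulr_sumr.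
    apply: le_trans (_ : _ <= \sum_(y in V | y != x) C * (a x + a y)) _; last first.
      apply: ler_sum_subpred => [y /andP[]//|y _].
      by rewrite mulr_ge0 // addr_ge0 ?wnorm1_ge0.
    apply: ler_sum => y /andP[yV yx].
    have nV := cardsD1D1 _ _ _ xV yV yx.
    have -> : n.-2 = #|V :\ x :\ y| by rewrite /n nV.
    apply: le_trans (IH _ _ _) _; first by move: hV; rewrite nV; lia.
    apply: ler_wpM2l => //; apply: le_trans (wnorm1_wxy _ _ _ _ _) _.
    apply: lerD; apply: wnorm1_subset; first exact: subD1set.
    by rewrite setD1C subD1set.
  under eq_bigr do rewrite -mulr_sumr.
  rewrite -mulr_sumr sum_pairsD -wnorm1_link -mulrnA le_eqVlt.
  by apply/predU1l; rewrite -mulr_natl -mul2n !natrM; ring.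
have n_gt0 : 0 < n%:R :> R by rewrite ltr0n; lia.
have coef : n%:R ^+ m.+1 * ((n * n.-1)%N%:R)^-1 <= 2 ^+ m.+1 * (n.-2)%:R ^+ m / n%:R :> R.
  rewrite natrM invfM (mulrC n%:R^-1) mulrA ler_pM2r ?invr_gt0 //.
  rewrite ler_pdivrMr ?ltr0n; last lia.
  rewrite -!natrX -!natrM ler_nat -mulnA [(_ ^ m * _)%N]mulnC.
  exact: expnS_le_pred_pred.
have P_ge0 : 0 <= P by do 2!apply: sumr_ge0 => ? _; exact: Wtotal_ge0.
rewrite [Wupper_const R m.+1]/= -/C mulrDr mulrDr mulrDl; apply: lerD.
  by apply: le_trans (Wvec0_le_wnorm1 _ _ w hV) _; rewrite natrM natrX.
rewrite [X in X <= _]mulrA; apply: le_trans (ler_wpM2r P_ge0 coef) _.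
rewrite [X in X <= _](_ : _ = 2 ^+ m.+1 / n%:R * ((n.-2)%:R ^+ m * P)); last by ring.
apply: le_trans (ler_wpM2l _ pair_bound) _; first by rewrite divr_ge0 ?exprn_ge0 ?ltW.
by rewrite le_eqVlt; apply/predU1l; field; rewrite gt_eqF.
Qed.

Lemma Wtotal_lower k V w : (2 * k <= #|V|)%N ->
  wnorm1 k w V <= 2 ^+ 'C(k.+1, 2) * (#|V|%:R ^+ k * Wtotal k V w).
Proof.
elim: k V w => [|m IH] V w hV.
  by rewrite /Wtotal big_nat1 /= bin0 !expr0 divr1 !mul1r /wnorm1 /wsum !sum_subsets0.
set n := #|V|; set K : R := 2 ^+ 'C(m.+1, 2).
have K_ge1 : 1 <= K by rewrite exprn_ege1 // ler1n.
have n_gt1 : 1 < n%:R :> R by rewrite ltr1n; lia.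
rewrite WtotalS; set P := \sum_(x in V) _.
set X := n%:R ^+ m.+1 * Wvec m.+1 V w 0.
set Y := n%:R ^+ m.+1 * ((n * n.-1)%N%:R^-1 * P).
have X_ge0 : 0 <= X by rewrite mulr_ge0 ?exprn_ge0 ?Wvec_ge0.
have P_ge0 : 0 <= P by do 2!apply: sumr_ge0 => ? _; exact: Wtotal_ge0.
have Y_ge0 : 0 <= Y by rewrite !mulr_ge0 ?exprn_ge0 ?invr_ge0.
have variation_bound : pair_variation m.+1 V w <= K * ((n.-1)%:R * Y).
  apply: le_trans (_ : _ <= K * (n%:R ^+ m * P)) _.
    rewrite /= !mulr_sumr; apply: ler_sum => x xV.
    rewrite !mulr_sumr; apply: ler_sum => y /andP[yV yx].
    have nV := cardsD1D1 _ _ _ xV yV yx.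
    apply: le_trans (IH _ _ _) _; first by move: hV; rewrite nV; lia.
    rewrite ler_wpM2l ?exprn_ge0 // ler_wpM2r ?Wtotal_ge0 //.
    by apply: lerXn2r; rewrite ?nnegrE ?ler0n // ler_nat /n nV; lia.
  rewrite /Y le_eqVlt; apply/predU1l; rewrite natrM.
  have n1_gt0 : 0 < (n.-1)%:R :> R by rewrite ltr0n; lia.
  by rewrite exprS; field; rewrite !gt_eqF // (lt_trans ltr01).
have key : (n.+1)%:R * `|wsum m.+1 w V| + pair_variation m.+1 V w <=
    K * ((n.+1)%:R * (X + Y)).
  have ws_le : `|wsum m.+1 w V| <= X by apply: normr_wsum_le_Wvec0; lia.
  apply: le_trans (lerD (ler_wpM2l (ler0n _ _) ws_le) variation_bound) _.
  rewrite mulrDr mulrDr lerD ?(ler_peMl (mulr_ge0 (ler0n _ _) X_ge0)) //.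
  by rewrite ler_wpM2l ?exprn_ge0 // ler_wpM2r // ler_nat; lia.
rewrite -(ler_pM2l (_ : 0 < (n.+1)%:R)) ?ltr0n //.
apply: le_trans (poincare m.+1 V w) _.
apply: le_trans (ler_wpM2l _ key) _; first exact: exprn_ge0.
rewrite binS bin1 exprD -/K -/n [n%:R ^+ m.+1 * _]mulrDr -/X -/Y.
by rewrite le_eqVlt; apply/predU1l; ring.
Qed.

End Hypergraph.

Theorem lemma3p2 (R : realFieldType) (k : nat) :
  exists c c' : R, 0 < c /\ 0 < c' /\
    forall (n : nat), (2 * k <= n)%N ->
    forall w : {set 'I_n} -> R,
      c * ((n%:R ^+ k)^-1) * wnorm1 k w [set: 'I_n]
        <= \sum_(0 <= i < k.+1) Wvec k [set: 'I_n] w i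
      /\ \sum_(0 <= i < k.+1) Wvec k [set: 'I_n] w i
        <= c' * ((n%:R ^+ k)^-1) * wnorm1 k w [set: 'I_n].
Proof.
exists (2 ^+ 'C(k.+1, 2))^-1, (Wupper_const R k).
split; first by rewrite invr_gt0 exprn_gt0.
split=> [|n hn w]; first exact: Wupper_const_gt0.
have hV : (2 * k <= #|[set: 'I_n]|)%N by rewrite cardsT card_ord.
have := Wtotal_lower _ _ _ _ w hV; have := Wtotal_upper _ _ _ _ w hV.
rewrite /Wtotal cardsT card_ord => upper lower.
have nk_gt0 : 0 < n%:R ^+ k :> R.
  by case: k hn {hV upper lower} => [|k] hn; rewrite ?expr0 // exprn_gt0 // ltr0n; lia.
have K_gt0 : 0 < 2 ^+ 'C(k.+1, 2) :> R by rewrite exprn_gt0.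
split; first by rewrite -invfM ler_pdivrMl ?mulr_gt0 // -mulrA.
by rewrite mulrAC ler_pdivlMr // mulrC.
Qed.
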